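(* Consider the system $x_{k+1}=Ax_k+Bu_k$ with state constraint set $\mathcal{X}=\{x\mid C_x x\le c_x\}$ and input constraint set $\mathcal{U}=\{u\mid C_u u\le c_u\}$, controlled by a ReLU network $u_k=\mathcal{N}(x_k;\theta)$, so that $x_{k+1}=f_{\text{cl}}(x_k)$ with $f_{\text{cl}}(x)=Ax+B\mathcal{N}(x;\theta)$. Let $\mathcal{X}_{\text{in}}=\{x\in\mathbb{R}^{n_x}\mid C_{\text{in}}x\le c_{\text{in}}\}$ be a polytope with $\mathcal{X}_{\text{in}}\subseteq\mathcal{X}$. Define $c_u^*\in\mathbb{R}^{n_{cu}}$ by $c_u^{*(i)}=\max_{x\in\mathcal{X}_{\text{in}}}C_u^{(i)}\mathcal{N}(x;\theta)$ and $\mathcal{U}^*=\{u\mid C_u u\le c_u^*\}$. For a matrix $C_{\text{out}}\in\mathbb{R}^{n_{\text{out}}\times n_x}$, define $c_{\text{out}}^*\in\mathbb{R}^{n_{\text{out}}}$ by $c_{\text{out}}^{*(i)}=\max_{x\in\mathcal{X}_{\text{in}}}C_{\text{out}}^{(i)}f_{\text{cl}}(x)$ and $\mathcal{X}^*_{1,\text{out}}=\{x\mid C_{\text{out}}x\le c_{\text{out}}^*\}$. If $\mathcal{U}^*\subseteq\mathcal{U}$ and $\mathcal{X}^*_{1,\text{out}}\subseteq\mathcal{X}_{\text{in}}$, then $\mathcal{X}_{\text{in}}$ is an admissible control-invariant set for the closed loop, and for every $x_0\in\mathcal{X}_{\text{in}}$ the closed-loop trajectory satisfies $x_k\in\mathcal{X}$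 and $\mathcal{N}(x_k;\theta)\in\mathcal{U}$ for all $k\ge 0$.
   Context: $A\in\mathbb{R}^{n_x\times n_x}$, $B\in\mathbb{R}^{n_x\times n_u}$, $(A,B)$ stabilizable; $C_x\in\mathbb{R}^{n_{cx}\times n_x}$, $C_u\in\mathbb{R}^{n_{cu}\times n_u}$; $M^{(i)}$ denotes the $i$-th row of a matrix $M$ and $v^{(i)}$ the $i$-th entry of a vector. A ReLU network is $\mathcal{N}(x;\theta)=W_{L+1}\xi_L+b_{L+1}$ with $\xi_0=x$, $\xi_l=\max(0,W_l\xi_{l-1}+b_l)$ elementwise for $l=1,\dots,L$ (weights and biases of compatible dimensions, output in $\mathbb{R}^{n_u}$). A polytope $\mathcal{C}$ is an admissible control-invariant set for the closed loop if $\mathcal{N}(x;\theta)\in\mathcal{U}$ for all $x\in\mathcal{C}$ and $f_{\text{cl}}(\mathcal{C})\subseteq\mathcal{C}$. *)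

From HB Require Import structures.
From mathcomp Require Import all_boot all_order all_algebra.
From mathcomp Require Import reals.
Set Implicit Arguments. Unset Strict Implicit. Unset Printing Implicit Defensive.
Import Order.TTheory GRing.Theory Num.Theory.
Local Open Scope ring_scope.

Section Defs.
Variable R : realType.

Definition vle (n : nat) (u v : 'cV[R]_n) : Prop := forall i, u i 0 <= v i 0.

Definition polyhedron (m n : nat) (C : 'M[R]_(m, n)) (c : 'cV[R]_m) (x : 'cV[R]_n)
  : Prop := vle (C *m x) c.

Definition relu (n : nat) (v : 'cV[R]_n) : 'cV[R]_n := \col_i Num.max 0 (v i 0).

Inductive relu_net : nat -> nat -> Type :=
| OutLayer : forall n m, 'M[R]_(m, n) -> 'cV[R]_m -> relu_net n m
| HiddenLayer : forall n h m, 'M[R]_(h, n) -> 'cV[R]_h -> relu_net h m -> relu_net n m.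

Fixpoint net_eval (n m : nat) (N : relu_net n m) : 'cV[R]_n -> 'cV[R]_m :=
  match N in relu_net n m return 'cV[R]_n -> 'cV[R]_m with
  | OutLayer _ _ W b => fun x => W *m x + b
  | HiddenLayer _ _ _ W b N' => fun x => net_eval N' (relu (W *m x + b))
  end.

Definition fcl (nx nu : nat) (A : 'M[R]_nx) (B : 'M[R]_(nx, nu))
  (N : relu_net nx nu) (x : 'cV[R]_nx) : 'cV[R]_nx := A *m x + B *m net_eval N x.

Definition traj (nx nu : nat) (A : 'M[R]_nx) (B : 'M[R]_(nx, nu))
  (N : relu_net nx nu) (x0 : 'cV[R]_nx) (k : nat) : 'cV[R]_nx :=
  iter k (fcl A B N) x0.

Definition stabilizable (nx nu : nat) (A : 'M[R]_nx) (B : 'M[R]_(nx, nu)) : Prop :=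
  exists K : 'M[R]_(nu, nx), forall eps : R, 0 < eps ->
    exists N0 : nat, forall k, (N0 <= k)%N -> forall i j,
      `|((A + B *m K) ^+ k) i j| < eps.

Definition bounded_set (n : nat) (S : 'cV[R]_n -> Prop) : Prop :=
  exists M : R, forall x, S x -> forall i, `|x i 0| <= M.

Definition is_max_over (n : nat) (S : 'cV[R]_n -> Prop) (f : 'cV[R]_n -> R) (c : R)
  : Prop := (exists2 x, S x & f x = c) /\ (forall x, S x -> f x <= c).

Definition admissible_ci (nx nu : nat) (A : 'M[R]_nx) (B : 'M[R]_(nx, nu))
  (N : relu_net nx nu) (U : 'cV[R]_nu -> Prop) (C : 'cV[R]_nx -> Prop) : Prop :=
  (forall x, C x -> U (net_eval N x)) /\ (forall x, C x -> C (fcl A B N x)).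

End Defs.

From HB Require Import structures.
From mathcomp Require Import all_boot all_order all_algebra.
From mathcomp Require Import reals.
Set Implicit Arguments. Unset Strict Implicit. Unset Printing Implicit Defensive.
Import Order.TTheory GRing.Theory Num.Theory.
Local Open Scope ring_scope.

(* The maxima c_u^* and c_out^* bound C_u N and C_out f_cl on X_in, so N maps
   X_in into U^* and f_cl maps X_in into X^*_{1,out}; the two inclusions make
   X_in admissible and invariant.  Stabilizability of (A,B) and boundedness of
   X_in are unused: they only serve to guarantee that the maxima exist. *)

Lemma iter_invariant (T : Type) (S : T -> Prop) (f : T -> T) :
  (forall x, S x -> S (f x)) -> forall x, S x -> forall k, S (iter k f x).
Proof. by move=> fS x Sx; elim=> [|k IHk] //=; apply: fS. Qed.

Section ClosedLoop.
Variable R : realType.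

Lemma max_over_polyhedron (n m p : nat) (S : 'cV[R]_n -> Prop)
    (C : 'M[R]_(m, p)) (c : 'cV[R]_m) (g : 'cV[R]_n -> 'cV[R]_p) :
  (forall i, is_max_over S (fun x => (C *m g x) i 0) (c i 0)) ->
  forall x, S x -> polyhedron C c (g x).
Proof. by move=> cmax x Sx i; have [_ ->] := cmax i. Qed.

Variables (nx nu : nat) (A : 'M[R]_nx) (B : 'M[R]_(nx, nu)) (N : relu_net R nx nu).

Lemma admissible_ci_traj (U : 'cV[R]_nu -> Prop) (C X : 'cV[R]_nx -> Prop) :
  admissible_ci A B N U C -> (forall x, C x -> X x) ->
  forall x0, C x0 -> forall k,
    X (traj A B N x0 k) /\ U (net_eval N (traj A B N x0 k)).
Proof.
move=> [CU Cinv] CX x0 Cx0 k.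
have Cxk := iter_invariant Cinv Cx0 k.
by split; [apply: CX | apply: CU].
Qed.

End ClosedLoop.

Theorem lemma1 (R : realType) (nx nu ncx ncu nin nout : nat)
  (A : 'M[R]_nx) (B : 'M[R]_(nx, nu)) (hAB : stabilizable A B)
  (Cx : 'M[R]_(ncx, nx)) (cx : 'cV[R]_ncx)
  (Cu : 'M[R]_(ncu, nu)) (cu : 'cV[R]_ncu)
  (N : relu_net R nx nu)
  (Cin : 'M[R]_(nin, nx)) (cin : 'cV[R]_nin)
  (hbnd : bounded_set (polyhedron Cin cin))
  (hsub : forall x, polyhedron Cin cin x -> polyhedron Cx cx x)
  (cu_star : 'cV[R]_ncu)
  (hcu : forall i, is_max_over (polyhedron Cin cin)
                     (fun x => (Cu *m net_eval N x) i 0) (cu_star i 0))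
  (Cout : 'M[R]_(nout, nx)) (cout_star : 'cV[R]_nout)
  (hcout : forall i, is_max_over (polyhedron Cin cin)
                       (fun x => (Cout *m fcl A B N x) i 0) (cout_star i 0))
  (hU : forall u, polyhedron Cu cu_star u -> polyhedron Cu cu u)
  (hX : forall x, polyhedron Cout cout_star x -> polyhedron Cin cin x) :
  admissible_ci A B N (polyhedron Cu cu) (polyhedron Cin cin) /\
  (forall x0, polyhedron Cin cin x0 -> forall k : nat,
     polyhedron Cx cx (traj A B N x0 k) /\
     polyhedron Cu cu (net_eval N (traj A B N x0 k))).
Proof.
have ci : admissible_ci A B N (polyhedron Cu cu) (polyhedron Cin cin).
  split=> x Xin_x.
  - by apply: hU; apply: (max_over_polyhedron hcu).
  - by apply: hX; apply: (max_over_polyhedron hcout).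
by split=> //; apply: admissible_ci_traj.
Qed.
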